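(* Let $\varphi:Q\to Q_C$ be the homomorphism determined by $\varphi(y_i)=A_i$ for $i=1,\dots,m$. Then for every $w\in Q$, $|\varphi(w)|_{Y_C}=C\,|w|_Y$, where $|\cdot|_{Y_C}$ is the word length in $Q_C$ with respect to $Y_C$ and $|\cdot|_Y$ is the word length in $Q$ with respect to $Y$.
   Context: Let $Q$ be a finitely generated recursively presented group with presentation $\langle Y\mid\mathcal{S}\rangle$, where $Y=\{y_1,\dots,y_m\}$ is finite, $\mathcal{S}$ is a recursive set of positive words over $Y$, and the empty word is not in $\mathcal{S}$. Let $C\ge1$ be an integer. For $i=1,\dots,m$ let $Y_{C,i}=\{a_{1,i},\dots,a_{C,i}\}$, $Y_C=\bigcup_iY_{C,i}$ (all letters distinct), $A_i=a_{1,i}\cdots a_{C,i}\in F(Y_C)$. For $r=r(y_1,\dots,y_m)\in\mathcal{S}$ let $r_C=r(A_1,\dots,A_m)$, $\mathcal{S}_C=\{r_C:r\in\mathcal{S}\}$, and $Q_C=\langle Y_C\mid\mathcal{S}_C\rangle$. (The map $\varphi$ is well defined since it sends each relator $r$ to $r_C$.) *)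

(* Group presentations <X | R> modelled combinatorially:
   elements of the presented group are equivalence classes of words over
   X^{+-1} under the congruence generated by free cancellation and
   insertion/deletion of relators. *)
From mathcomp Require Import all_boot.
Set Implicit Arguments. Unset Strict Implicit. Unset Printing Implicit Defensive.

(* a letter (x, true) is x, (x, false) is x^{-1} *)
Definition letter (T : Type) := (T * bool)%type.
Definition gword (T : Type) := seq (letter T).

Definition inv_letter (T : Type) (a : letter T) : letter T := (a.1, ~~ a.2).
Definition inv_word (T : Type) (w : gword T) : gword T := rev (map (@inv_letter T) w).
Definition pos_word (T : Type) (r : seq T) : gword T := map (fun x => (x, true)) r.

Inductive pres_eq (T : Type) (R : seq T -> Prop) : gword T -> gword T -> Prop :=
| pe_refl w : pres_eq R w w
| pe_sym u v : pres_eq R u v -> pres_eq R v u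
| pe_trans u v w : pres_eq R u v -> pres_eq R v w -> pres_eq R u w
| pe_free u v a : pres_eq R (u ++ [:: a; inv_letter a] ++ v) (u ++ v)
| pe_rel u v r : R r -> pres_eq R (u ++ pos_word r ++ v) (u ++ v).

Definition word_length_is (T : Type) (R : seq T -> Prop) (w : gword T) (n : nat) : Prop :=
  (exists w', pres_eq R w w' /\ size w' = n) /\
  (forall w', pres_eq R w w' -> n <= size w').

(* Y_C = {a_{j,i}} indexed by 'I_C * 'I_m; A_i = a_{1,i} ... a_{C,i} *)
Definition A_word (C m : nat) (i : 'I_m) : seq ('I_C * 'I_m) :=
  [seq (j, i) | j <- enum 'I_C].

Definition relC (C m : nat) (r : seq 'I_m) : seq ('I_C * 'I_m) :=
  flatten (map (@A_word C m) r).

Definition S_C (C m : nat) (S : pred (seq 'I_m)) : seq ('I_C * 'I_m) -> Prop :=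
  fun r' => exists2 r, S r & r' = relC C r.

Definition phi_letter (C m : nat) (a : letter 'I_m) : gword ('I_C * 'I_m) :=
  if a.2 then pos_word (A_word C a.1) else inv_word (pos_word (A_word C a.1)).
Definition phi_word (C m : nat) (w : gword 'I_m) : gword ('I_C * 'I_m) :=
  flatten (map (@phi_letter C m) w).

(* The substitution y_i |-> A_i maps equal words of Q to equal words of Q_C
   and multiplies lengths by C, which gives |phi(w)| <= C |w|.  Conversely,
   for each column j the map a_{j,i} |-> y_i, a_{k,i} |-> 1 (k <> j) is a
   homomorphism Q_C -> Q retracting phi; it sends a word u representing
   phi(w) to a word representing w, so u has at least |w| letters in each
   of the C columns. *)
From mathcomp Require Import all_boot.

Set Implicit Arguments.
Unset Strict Implicit.
Unset Printing Implicit Defensive.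

Lemma inv_letterK (T : Type) : involutive (@inv_letter T).
Proof. by case=> x b; rewrite /inv_letter /= negbK. Qed.

Lemma inv_wordK (T : Type) : involutive (@inv_word T).
Proof.
by move=> w; rewrite /inv_word map_rev revK -map_comp (eq_map (@inv_letterK T)) map_id.
Qed.

Lemma inv_word_cons (T : Type) (a : letter T) (w : gword T) :
  inv_word (a :: w) = inv_word w ++ [:: inv_letter a].
Proof. by rewrite /inv_word /= rev_cons cats1. Qed.

Section PresEq.

Variables (T : Type) (R : seq T -> Prop).

Lemma pres_eq_ctx (x y u v : gword T) :
  pres_eq R u v -> pres_eq R (x ++ u ++ y) (x ++ v ++ y).
Proof.
elim=> {u v} [w | u v _ IHuv | u v w _ IHuv _ IHvw | u v a | u v r Rr].
- exact: pe_refl.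
- exact: pe_sym IHuv.
- exact: pe_trans IHuv IHvw.
- by rewrite -!catA !(catA x u); apply: pe_free.
- by rewrite -!catA !(catA x u); apply: pe_rel.
Qed.

Lemma pres_eq_cat_inv (x : gword T) : pres_eq R (x ++ inv_word x) [::].
Proof.
elim: x => [|a x IHx]; first exact: pe_refl.
rewrite inv_word_cons -cat1s -!catA (catA x).
apply: pe_trans (pres_eq_ctx [:: a] [:: inv_letter a] IHx) _.
exact: (pe_free R [::] [::] a).
Qed.

Lemma pres_eq_rel0 (r : seq T) : R r -> pres_eq R (pos_word r) [::].
Proof. by move=> Rr; have := pe_rel [::] [::] Rr; rewrite /= cats0. Qed.

End PresEq.

Definition word_subst (T U : Type) (f : letter T -> gword U) (w : gword T) : gword U :=
  flatten (map f w).

Lemma word_subst_cat (T U : Type) (f : letter T -> gword U) (u v : gword T) :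
  word_subst f (u ++ v) = word_subst f u ++ word_subst f v.
Proof. by rewrite /word_subst map_cat flatten_cat. Qed.

Lemma word_subst_comp (T U V : Type) (f : letter T -> gword U)
    (g : letter U -> gword V) (w : gword T) :
  word_subst g (word_subst f w) = word_subst (word_subst g \o f) w.
Proof. by elim: w => //= a w IHw; rewrite word_subst_cat IHw. Qed.

Lemma pres_eq_subst (T U : Type) (R : seq T -> Prop) (R' : seq U -> Prop)
    (f : letter T -> gword U) :
  (forall a, f (inv_letter a) = inv_word (f a)) ->
  (forall r, R r -> pres_eq R' (word_subst f (pos_word r)) [::]) ->
  forall u v, pres_eq R u v -> pres_eq R' (word_subst f u) (word_subst f v).
Proof.
move=> f_inv f_rel u v.
elim=> {u v} [w | u v _ IHuv | u v w _ IHuv _ IHvw | u v a | u v r Rr].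
- exact: pe_refl.
- exact: pe_sym IHuv.
- exact: pe_trans IHuv IHvw.
- have subst_aa' : word_subst f [:: a; inv_letter a] = f a ++ inv_word (f a).
    by rewrite /word_subst /= cats0 -f_inv.
  rewrite !word_subst_cat subst_aa'.
  by have := pres_eq_ctx (word_subst f u) (word_subst f v) (pres_eq_cat_inv R' (f a)).
- rewrite !word_subst_cat.
  by have := pres_eq_ctx (word_subst f u) (word_subst f v) (f_rel r Rr).
Qed.

Lemma sum_count_fibers (U : Type) (T : finType) (f : U -> T) (s : seq U) :
  \sum_(j : T) count (fun x => f x == j) s = size s.
Proof.
elim: s => [|x s IHs] /=; first by rewrite big1.
rewrite big_split /= IHs (bigD1 (f x)) //= eqxx big1 // => j neq_j.
by rewrite eq_sym (negbTE neq_j).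
Qed.

Section Blowup.

Variables (m C : nat) (S : pred (seq 'I_m)).

Local Notation phi := (@phi_word C m).
Local Notation SC := (@S_C C m S).

Lemma phi_wordE : phi = word_subst (@phi_letter C m).
Proof. by []. Qed.

Lemma phi_letter_inv (a : letter 'I_m) :
  phi_letter C (inv_letter a) = inv_word (phi_letter C a).
Proof. by case: a => x [] //=; rewrite /phi_letter /= inv_wordK. Qed.

Lemma phi_word_pos (r : seq 'I_m) : phi (pos_word r) = pos_word (relC C r).
Proof. by rewrite /phi_word /relC /pos_word map_flatten -!map_comp. Qed.

Lemma pres_eq_phi_word (u v : gword 'I_m) :
  pres_eq S u v -> pres_eq SC (phi u) (phi v).
Proof.
apply: pres_eq_subst => [|r Sr]; first exact: phi_letter_inv.
by rewrite -phi_wordE phi_word_pos; apply: pres_eq_rel0; exists r.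
Qed.

Lemma size_phi_word (w : gword 'I_m) : size (phi w) = C * size w.
Proof.
elim: w => [|a w IHw] /=; first by rewrite muln0.
rewrite size_cat IHw mulnS /phi_letter.
by case: a.2; rewrite ?size_rev !size_map -?enumT size_enum_ord.
Qed.

Definition proj_letter (j : 'I_C) (l : letter ('I_C * 'I_m)) : gword 'I_m :=
  if l.1.1 == j then [:: (l.1.2, l.2)] else [::].

Definition proj_word (j : 'I_C) := word_subst (proj_letter j).

Lemma proj_letter_inv j (l : letter ('I_C * 'I_m)) :
  proj_letter j (inv_letter l) = inv_word (proj_letter j l).
Proof. by rewrite /proj_letter /=; case: ifP. Qed.

Lemma proj_word_column j x b (s : seq 'I_C) :
  proj_word j [seq ((k, x), b) | k <- s] = nseq (count_mem j s) (x, b).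
Proof.
rewrite /proj_word; elim: s => //= k s IHs; rewrite -cat1s word_subst_cat IHs.
by rewrite /word_subst /= /proj_letter /=; case: (k == j).
Qed.

Lemma count_mem_enum_ord (j : 'I_C) : count_mem j (enum 'I_C) = 1.
Proof. by rewrite count_uniq_mem ?enum_uniq ?mem_enum. Qed.

Lemma proj_phi_letter j (a : letter 'I_m) : proj_word j (phi_letter C a) = [:: a].
Proof.
case: a => x []; rewrite /phi_letter /= /pos_word /A_word -map_comp.
  by rewrite proj_word_column count_mem_enum_ord.
by rewrite /inv_word -map_comp -map_rev proj_word_column count_rev count_mem_enum_ord.
Qed.

Lemma proj_phi_word j (w : gword 'I_m) : proj_word j (phi w) = w.
Proof.
rewrite phi_wordE /proj_word word_subst_comp.
by rewrite /word_subst (eq_map (proj_phi_letter j)) flatten_seq1.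
Qed.

Lemma pres_eq_proj_word j (u v : gword ('I_C * 'I_m)) :
  pres_eq SC u v -> pres_eq S (proj_word j u) (proj_word j v).
Proof.
apply: pres_eq_subst => [|_ [r Sr ->]]; first exact: proj_letter_inv.
by rewrite -phi_word_pos -/(proj_word j _) proj_phi_word; apply: pres_eq_rel0.
Qed.

Lemma size_proj_word j (u : gword ('I_C * 'I_m)) :
  size (proj_word j u) = count (fun l => l.1.1 == j) u.
Proof.
elim: u => //= l u IHu; rewrite size_cat IHu /proj_letter.
by case: (l.1.1 == j).
Qed.

Lemma phi_word_length_lb (w : gword 'I_m) (n : nat) :
  (forall w', pres_eq S w w' -> n <= size w') ->
  forall u, pres_eq SC (phi w) u -> C * n <= size u.
Proof.
move=> w_min u phi_w_u.
have column_lb j : n <= count (fun l => l.1.1 == j) u.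
  rewrite -size_proj_word; apply: w_min.
  by rewrite -(proj_phi_word j w); apply: pres_eq_proj_word.
rewrite -(sum_count_fibers (fun l => l.1.1) u) -{1}(card_ord C) -sum_nat_const.
exact: leq_sum.
Qed.

End Blowup.

Theorem lemma3p4 (m C : nat) (S : pred (seq 'I_m))
  (hS0 : ~~ S [::]) (hC : 0 < C) :
  forall (w : gword 'I_m) (n : nat),
    word_length_is S w n ->
    word_length_is (@S_C C m S) (@phi_word C m w) (C * n).
Proof.
move=> w n [[w' [w_w' <-]] w_min]; split; last exact: phi_word_length_lb.
by exists (phi_word C w'); rewrite size_phi_word; split; first exact: pres_eq_phi_word.
Qed.
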